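(* There is an isomorphism of abelian groups \[ C_2^{\rm SLB}(X)\cong\bigoplus_{\substack{a,b,c\in\mathbb Z_p,\ a\ne b,\ b\ne c,\\ (a,b,c,[a,b,c])=\min Q(a,b,c)}}\mathbb Z\big\langle((a,b),(a,c))\big\rangle\ \oplus\bigoplus_{\substack{a,b\in\mathbb Z_p,\ a<b}}\mathbb Z_2\big\langle((a,a),(a,b))\big\rangle, \] and \[ C_1^{\rm SLB}(X)\cong\bigoplus_{\substack{a,b\in\mathbb Z_p,\ a<b}}\mathbb Z\langle(a,b)\rangle\ \oplus\ \bigoplus_{a\in\mathbb Z_p}\mathbb Z_2\langle(a,a)\rangle, \] where $Q(a,b,c)=\{(a,b,c,[a,b,c]),\ (b,a,[a,b,c],c),\ (c,[a,b,c],a,b),\ ([a,b,c],c,b,a)\}\subset\mathbb Z_p^4$, $\mathbb Z\langle x\rangle$ denotes an infinite cyclic group generated by (the class of) $x$ and $\mathbb Z_2\langle x\rangle$ a cyclic group of order $2$ generated by (the class of) $x$.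
   Context: Let $p$ be an odd prime, $X=\mathbb Z_p$, and $[a,b,c]=a-b+c$. Let $\rho((a,b))=(b,a)$, $(a,b)\,\underline{\star}\,(a,c)=(c,[a,b,c])$, $(a,b)\,\overline{\star}\,(a,c)=(c,[a,c,b])$. For $n\ge1$ let $C_n^{\rm lb}(X)$ be the free abelian group on tuples $((a,b_1),\dots,(a,b_n))$, $a,b_i\in X$. Let $D_n^{\rm lb}(X)$ be the subgroup generated by tuples with $b_i=b_{i+1}$ for some $i\in\{1,\dots,n-1\}$, and $D_n^{\rm lb}(X,\rho)$ the subgroup generated by all elements $((a,b_1),\dots,(a,b_n))+((a,b_1)\underline\star(a,b_i),\dots,(a,b_{i-1})\underline\star(a,b_i),\rho((a,b_i)),(a,b_{i+1})\overline\star(a,b_i),\dots,(a,b_n)\overline\star(a,b_i))$, $i\in\{1,\dots,n\}$. Define $C_n^{\rm SLB}(X)=C_n^{\rm lb}(X)/(D_n^{\rm lb}(X)+D_n^{\rm lb}(X,\rho))$. Elements of $\mathbb Z_p$ are represented by the integers $0,1,\dots,p-1$, and $<$ on $\mathbb Z_p$ is the usual order of these representatives; $\mathbb Z_p^4$ is ordered lexicographically: $(a_1,\dots,a_4)<(b_1,\dots,b_4)$ iff $a_j<b_j$ for the least $j$ with $a_j\ne b_j$. $\min Q$ refers to this order. *)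

From HB Require Import structures.
From mathcomp Require Import all_boot all_order all_algebra.
Set Implicit Arguments.
Unset Strict Implicit.
Unset Printing Implicit Defensive.
Import GRing.Theory.
Local Open Scope ring_scope.

(* X = Z_p, elements represented by ordinals 0..p-1 ('Z_p, p >= 2). *)

Definition tern (p : nat) (a b c : 'Z_p) : 'Z_p := a - b + c.

Definition rho (p : nat) (x : 'Z_p * 'Z_p) : 'Z_p * 'Z_p := (x.2, x.1).
Definition ustar (p : nat) (x y : 'Z_p * 'Z_p) : 'Z_p * 'Z_p :=
  (y.2, tern x.1 x.2 y.2).
Definition ostar (p : nat) (x y : 'Z_p * 'Z_p) : 'Z_p * 'Z_p :=
  (y.2, tern x.1 y.2 x.2).

(* A basis tuple ((a,b_1),...,(a,b_n)) of C_n^lb(X) is encoded as (a, (b_1,...,b_n)). *)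
Definition gen (p n : nat) := ('Z_p * n.-tuple 'Z_p)%type.

Definition lbtuple (p n : nat) (g : gen p n) : n.-tuple ('Z_p * 'Z_p) :=
  map_tuple (fun b => (g.1, b)) g.2.

Definition C (p n : nat) := {ffun gen p n -> int}.

Definition basis (p n : nat) (g : gen p n) : C p n := [ffun h => (h == g)%:R].

Definition degen (p n : nat) (g : gen p n) : bool :=
  [exists i : 'I_n, exists j : 'I_n,
     (nat_of_ord j == (nat_of_ord i).+1)%N && (tnth g.2 i == tnth g.2 j)].

Definition rel_tuple (p n : nat) (g : gen p n) (i : 'I_n) : n.-tuple ('Z_p * 'Z_p) :=
  [tuple (let x := (g.1, tnth g.2 j) in let y := (g.1, tnth g.2 i) in
          if (j < i)%N then ustar x y else if j == i then rho y else ostar x y)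
   | j < n].

(* all its pairs have common first coordinate b_i, so it is the basis tuple: *)
Definition rel_gen (p n : nat) (g : gen p n) (i : 'I_n) : gen p n :=
  (tnth g.2 i, map_tuple snd (rel_tuple g i)).

Lemma rel_genE (p n : nat) (g : gen p n) (i : 'I_n) :
  lbtuple (rel_gen g i) = rel_tuple g i.
Proof.
apply: eq_from_tnth => j; rewrite !tnth_map /= tnth_ord_tuple.
by case: ifP => _ //; case: ifP.
Qed.

Definition inSLBrel (p n : nat) (x : C p n) : Prop :=
  exists (c1 : {ffun gen p n -> int}) (c2 : {ffun (gen p n * 'I_n) -> int}),
    x = \sum_(g | degen g) (basis g) *~ c1 g
        + \sum_(gi : gen p n * 'I_n) (basis gi.1 + basis (rel_gen gi.1 gi.2)) *~ c2 gi.

(* C_n^SLB(X) = C_n^lb / (D + D_rho) is isomorphic to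
   (+)_{g in PI} Z<g> (+) (+)_{g in PJ} Z_2<g>, with the class of g mapped to
   the corresponding generator: a surjective homomorphism with kernel D + D_rho
   sending basis elements to the generators. *)
Definition SLB_iso_gens (p n : nat) (PI PJ : pred (gen p n)) : Prop :=
  exists phi : C p n ->
      ({ffun {g : gen p n | PI g} -> int} * {ffun {g : gen p n | PJ g} -> 'Z_2})%type,
    [/\ {morph phi : x y / x + y},
        forall y, exists x, phi x = y,
        forall x, phi x = 0 <-> inSLBrel x,
        forall i : {g : gen p n | PI g},
          phi (basis (val i)) = ([ffun k => (k == i)%:R], 0) &
        forall j : {g : gen p n | PJ g},
          phi (basis (val j)) = (0, [ffun k => (k == j)%:R])].

Fixpoint lexle (s t : seq nat) : bool :=
  match s, t with
  | x :: s', y :: t' => (x < y)%N || ((x == y) && lexle s' t')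
  | _, _ => true
  end.

Definition quad (p : nat) (a b c d : 'Z_p) : seq nat :=
  [:: nat_of_ord a; nat_of_ord b; nat_of_ord c; nat_of_ord d].

Definition Qset (p : nat) (a b c : 'Z_p) : seq (seq nat) :=
  [:: quad a b c (tern a b c); quad b a (tern a b c) c;
      quad c (tern a b c) a b; quad (tern a b c) c b a].

Definition is_minQ (v : seq nat) (Q : seq (seq nat)) : bool :=
  (v \in Q) && all (lexle v) Q.

Definition I2 (p : nat) : pred (gen p 2) := fun g =>
  let a := g.1 in let b := tnth g.2 ord0 in let c := tnth g.2 ord_max in
  [&& a != b, b != c & is_minQ (quad a b c (tern a b c)) (Qset a b c)].

Definition J2 (p : nat) : pred (gen p 2) := fun g =>
  let a := g.1 in let b := tnth g.2 ord0 in let c := tnth g.2 ord_max in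
  (b == a) && (nat_of_ord a < nat_of_ord c)%N.

Definition I1 (p : nat) : pred (gen p 1) := fun g =>
  (nat_of_ord g.1 < nat_of_ord (tnth g.2 ord0))%N.

Definition J1 (p : nat) : pred (gen p 1) := fun g => tnth g.2 ord0 == g.1.

Arguments I2 p : clear implicits.
Arguments J2 p : clear implicits.
Arguments I1 p : clear implicits.
Arguments J1 p : clear implicits.

From HB Require Import structures.
From mathcomp Require Import all_boot all_order all_algebra.
From mathcomp Require Import ring.
Set Implicit Arguments.
Unset Strict Implicit.
Unset Printing Implicit Defensive.
Import GRing.Theory.
Local Open Scope ring_scope.

(* Send each basis tuple g to an explicit element f g of the target: the signed
   sum of the generators lying in the orbit of g under the relations.  Then f
   kills D + D_rho, so it induces a homomorphism phi.  Lifting the target back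
   into C_n^lb with the representatives 0, 1 of Z_2 gives a right inverse of phi
   which is additive modulo D + D_rho, because twice a Z_2-generator
   ((a,a),(a,b)) is a relation (it is fixed by its first relation move).  So it
   suffices that every basis tuple is congruent to the lift of its image: this
   holds on the generators by construction, on degenerate tuples trivially, and
   it propagates along the relations g ~ - rel_gen g i, which reach every tuple
   from a generator.
   For n = 2 the two relation moves generate a Klein four-group acting on
   (a,b,c), whose orbits are exactly the sets Q(a,b,c); when a <> b <> c the
   orbit has four distinct points (this uses that p is odd), and the unique
   generator in it is the lexicographically least one. *)

Definition delta_ffun {V : nzRingType} {T : finType} (P : pred T) (h : T) :
  {ffun {x : T | P x} -> V} := [ffun k => (val k == h)%:R].

Lemma delta_ffun_val (V : nzRingType) (T : finType) (P : pred T) (i : {x : T | P x}) :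
  delta_ffun P (val i) = [ffun k => (k == i)%:R] :> {ffun _ -> V}.
Proof. by apply/ffunP => k; rewrite !ffunE val_eqE. Qed.

Lemma delta_ffun_out (V : nzRingType) (T : finType) (P : pred T) (h : T) :
  ~~ P h -> delta_ffun P h = 0 :> {ffun _ -> V}.
Proof.
move=> Ph; apply/ffunP => k; rewrite !ffunE.
by case: eqP => // kh; move: Ph; rewrite -kh (valP k).
Qed.

Lemma oppr_ffun_Z2 (T : finType) (x : {ffun T -> 'Z_2}) : - x = x.
Proof. by apply/ffunP => k; rewrite ffunE oppr_pchar2 // pchar_Zp. Qed.

Lemma C_basis_expansion (p n : nat) (x : C p n) : x = \sum_g basis g *~ x g.
Proof.
apply/ffunP => h; rewrite sum_ffunE (bigD1 h) //= big1 ?addr0.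
  by rewrite ffunMzE ffunE eqxx intz.
by move=> g hg; rewrite ffunMzE ffunE eq_sym (negbTE hg) mul0rz.
Qed.

Section Presentation.
Variables (p n : nat) (PI PJ : pred (gen p n)).
Local Notation T :=
  ({ffun {g : gen p n | PI g} -> int} * {ffun {g : gen p n | PJ g} -> 'Z_2})%type.
Local Notation R := (@inSLBrel p n).

Lemma inSLBrel0 : R 0.
Proof. by exists 0, 0; rewrite !big1 ?addr0 // => g _; rewrite ffunE mulr0z. Qed.

Lemma inSLBrelD x y : R x -> R y -> R (x + y).
Proof.
case=> c1 [c2 ->] [d1 [d2 ->]]; exists (c1 + d1), (c2 + d2).
rewrite addrACA -!big_split /=; congr (_ + _); apply: eq_bigr => g _;
by rewrite ffunE mulrzDr.
Qed.

Lemma inSLBrelN x : R x -> R (- x).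
Proof.
case=> c1 [c2 ->]; exists (- c1), (- c2).
rewrite opprD -!sumrN; congr (_ + _); apply: eq_bigr => g _;
by rewrite ffunE mulrNz.
Qed.

Lemma inSLBrelB x y : R x -> R y -> R (x - y).
Proof. by move=> Rx Ry; apply/inSLBrelD/inSLBrelN. Qed.

Lemma inSLBrel_sum (I : Type) (r : seq I) (P : pred I) (F : I -> C p n) :
  (forall i, P i -> R (F i)) -> R (\sum_(i <- r | P i) F i).
Proof. by move=> RF; apply: big_ind => //; [exact: inSLBrel0 | exact: inSLBrelD]. Qed.

Lemma inSLBrelMn x k : R x -> R (x *+ k).
Proof.
by move=> Rx; elim: k => [|k IH]; rewrite ?mulr0n ?mulrS; [exact: inSLBrel0 | exact: inSLBrelD].
Qed.

Lemma inSLBrel_degen g : degen g -> R (basis g).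
Proof.
move=> dg; exists [ffun h => (h == g)%:R], 0.
rewrite [X in _ + X]big1 ?addr0; last by move=> gi _; rewrite ffunE mulr0z.
rewrite (bigD1 g) //= ffunE eqxx mulr1z big1 ?addr0 // => h /andP [_ hg].
by rewrite ffunE (negbTE hg) mulr0z.
Qed.

Lemma inSLBrel_rel_gen g i : R (basis g + basis (rel_gen g i)).
Proof.
exists 0, [ffun gi => (gi == (g, i))%:R].
rewrite big1 ?add0r; last by move=> h _; rewrite ffunE mulr0z.
rewrite (bigD1 (g, i)) //= ffunE eqxx mulr1z big1 ?addr0 // => h hgi.
by rewrite ffunE (negbTE hgi) mulr0z.
Qed.

Lemma inSLBrel_rel_gen_fixed g i : rel_gen g i = g -> R (basis g *+ 2).
Proof. by move=> gi; rewrite mulr2n -{2}gi; apply: inSLBrel_rel_gen. Qed.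

Definition lift (y : T) : C p n :=
  \sum_(i : {g : gen p n | PI g}) basis (val i) *~ y.1 i
  + \sum_(j : {g : gen p n | PJ g}) basis (val j) *+ y.2 j.

Lemma lift0 : lift 0 = 0.
Proof. by rewrite /lift !big1 ?addr0 // => i _; rewrite ffunE ?mulr0z ?mulr0n. Qed.

Lemma lift_deltaI h : PI h -> lift (delta_ffun PI h, 0) = basis h.
Proof.
move=> PIh; rewrite /lift [X in _ + X]big1 ?addr0; last by move=> j _; rewrite ffunE.
rewrite (bigD1 (exist _ h PIh)) //= ffunE eqxx big1 ?addr0 // => k kh.
by rewrite ffunE; case: eqP => // kE; case/eqP: kh; apply: val_inj.
Qed.

Lemma lift_deltaJ h : PJ h -> lift (0, delta_ffun PJ h) = basis h.
Proof.
move=> PJh; rewrite /lift big1 ?add0r; last by move=> i _; rewrite ffunE.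
rewrite (bigD1 (exist _ h PJh)) //= ffunE eqxx big1 ?addr0 // => k kh.
by rewrite ffunE; case: eqP => // kE; case/eqP: kh; apply: val_inj.
Qed.

Hypothesis twice_PJ : forall h, PJ h -> R (basis h *+ 2).

(* [lift] is additive only modulo [R], since it picks the representatives 0, 1 of ['Z_2]. *)
Lemma lift_additive_mod y z : R (lift y + lift z - lift (y + z)).
Proof.
rewrite /lift.
have -> : \sum_(i : {g : gen p n | PI g}) basis (val i) *~ (y + z).1 i =
    \sum_(i : {g : gen p n | PI g}) basis (val i) *~ y.1 i
    + \sum_(i : {g : gen p n | PI g}) basis (val i) *~ z.1 i.
  by rewrite -big_split; apply: eq_bigr => i _; rewrite ffunE mulrzDr.
rewrite [X in X - _]addrACA opprD [X in R X]addrACA subrr add0r -big_split -sumrN -big_split /=.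
apply: inSLBrel_sum => j _; rewrite ffunE.
set u := nat_of_ord (y.2 j); set v := nat_of_ord (z.2 j).
have -> : nat_of_ord (y.2 j + z.2 j) = ((u + v) %% 2)%N by [].
rewrite -mulrnDr {1}(divn_eq (u + v) 2) mulrnDr addrK mulnC mulrnA.
exact/inSLBrelMn/twice_PJ/valP.
Qed.

Lemma liftN_mod y : R (lift y + lift (- y)).
Proof. by have := lift_additive_mod y (- y); rewrite subrr lift0 subr0. Qed.

Variable f : gen p n -> T.

Definition lin_ext (x : C p n) : T := \sum_g f g *~ x g.

Lemma lin_ext_is_nmod_morphism : nmod_morphism lin_ext.
Proof.
split=> [|x y]; rewrite /lin_ext; first by apply: big1 => g _; rewrite ffunE.
by rewrite -big_split; apply: eq_bigr => g _; rewrite ffunE mulrzDr.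
Qed.

HB.instance Definition _ :=
  GRing.isNmodMorphism.Build (C p n) T lin_ext lin_ext_is_nmod_morphism.

Lemma lin_ext_basis h : lin_ext (basis h) = f h.
Proof.
rewrite /lin_ext (bigD1 h) //= ffunE eqxx big1 ?addr0 // => g gh.
by rewrite ffunE (negbTE gh).
Qed.

Hypothesis f_PI : forall h, PI h -> f h = (delta_ffun PI h, 0).
Hypothesis f_PJ : forall h, PJ h -> f h = (0, delta_ffun PJ h).
Hypothesis f_degen : forall g, degen g -> f g = 0.
Hypothesis f_rel_gen : forall g i, f (rel_gen g i) = - f g.

Lemma lin_ext_lift y : lin_ext (lift y) = y.
Proof.
rewrite /lift raddfD !raddf_sum /=.
under eq_bigr => i _ do rewrite raddfMz /= lin_ext_basis f_PI ?(valP i) // delta_ffun_val.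
under [X in _ + X]eq_bigr => j _ do rewrite raddfMn /= lin_ext_basis f_PJ ?(valP j) // delta_ffun_val.
apply: injective_projections; rewrite /= !raddf_sum /=.
- rewrite [X in _ + X]big1 ?addr0 => [|j _]; last by rewrite raddfMn /= mul0rn.
  apply/ffunP => k; rewrite sum_ffunE (bigD1 k) //= big1 ?addr0 => [|i ik].
    by rewrite raddfMz ffunMzE ffunE eqxx intz.
  by rewrite raddfMz ffunMzE ffunE eq_sym (negbTE ik) mul0rz.
- rewrite big1 ?add0r => [|i _]; last by rewrite raddfMz /= mul0rz.
  apply/ffunP => k; rewrite sum_ffunE (bigD1 k) //= big1 ?addr0 => [|j jk].
    by rewrite raddfMn ffunMnE ffunE eqxx natr_Zp.
  by rewrite raddfMn ffunMnE ffunE eq_sym (negbTE jk) mul0rn.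
Qed.

Lemma lin_ext_eq0 x : R x -> lin_ext x = 0.
Proof.
case=> c1 [c2 ->]; rewrite raddfD !raddf_sum big1 ?add0r => [|g dg].
  by apply: big1 => gi _; rewrite raddfMz raddfD /= !lin_ext_basis f_rel_gen subrr mul0rz.
by rewrite raddfMz /= lin_ext_basis f_degen // mul0rz.
Qed.

Definition lift_inverse_at g := R (basis g - lift (f g)).

Lemma lift_inverse_at_PI h : PI h -> lift_inverse_at h.
Proof. by move=> PIh; rewrite /lift_inverse_at f_PI // lift_deltaI // subrr; exact: inSLBrel0. Qed.

Lemma lift_inverse_at_PJ h : PJ h -> lift_inverse_at h.
Proof. by move=> PJh; rewrite /lift_inverse_at f_PJ // lift_deltaJ // subrr; exact: inSLBrel0. Qed.

Lemma lift_inverse_at_degen g : degen g -> lift_inverse_at g.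
Proof.
by move=> dg; rewrite /lift_inverse_at f_degen // lift0 subr0; exact: inSLBrel_degen.
Qed.

Lemma lift_inverse_at_rel_gen g i : lift_inverse_at g -> lift_inverse_at (rel_gen g i).
Proof.
rewrite /lift_inverse_at f_rel_gen => Rg.
have -> : basis (rel_gen g i) - lift (- f g) =
    basis g + basis (rel_gen g i) - (basis g - lift (f g)) - (lift (f g) + lift (- f g)).
  by apply/ffunP => k; rewrite !ffunE; ring.
by apply: inSLBrelB; [apply: inSLBrelB => //; exact: inSLBrel_rel_gen | exact: liftN_mod].
Qed.

Hypothesis lift_inverse : forall g, lift_inverse_at g.

Lemma lift_lin_ext_mod x : R (x - lift (lin_ext x)).
Proof.
pose Q a := R (a - lift (lin_ext a)).
have QD a b : Q a -> Q b -> Q (a + b).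
  move=> Qa Qb; rewrite /Q (raddfD lin_ext).
  have -> : a + b - lift (lin_ext a + lin_ext b) = (a - lift (lin_ext a)) +
      (b - lift (lin_ext b)) + (lift (lin_ext a) + lift (lin_ext b) - lift (lin_ext a + lin_ext b)).
    by apply/ffunP => k; rewrite !ffunE; ring.
  by apply: inSLBrelD; [exact: inSLBrelD | exact: lift_additive_mod].
have QN a : Q a -> Q (- a).
  move=> Qa; rewrite /Q (raddfN lin_ext).
  have -> : - a - lift (- lin_ext a) =
      - (a - lift (lin_ext a)) - (lift (lin_ext a) + lift (- lin_ext a)).
    by apply/ffunP => k; rewrite !ffunE; ring.
  by apply: inSLBrelB; [exact: inSLBrelN | exact: liftN_mod].
have QMn a k : Q a -> Q (a *+ k).
  move=> Qa; elim: k => [|k IH]; last by rewrite mulrS; exact: QD.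
  by rewrite /Q mulr0n raddf0 lift0 subr0; exact: inSLBrel0.
rewrite -/(Q x) [x]C_basis_expansion; apply: big_ind => //.
  by rewrite /Q raddf0 lift0 subr0; exact: inSLBrel0.
move=> g _; have Qg : Q (basis g) by rewrite /Q lin_ext_basis; exact: lift_inverse.
by case: (x g) => k; [exact: QMn | exact/QN/QMn].
Qed.

Lemma SLB_iso_gens_of_lift_inverse : SLB_iso_gens PI PJ.
Proof.
exists lin_ext; split.
- exact: raddfD.
- by move=> y; exists (lift y); exact: lin_ext_lift.
- move=> x; split; last exact: lin_ext_eq0.
  by move=> x0; have := lift_lin_ext_mod x; rewrite x0 lift0 subr0.
- by move=> i; rewrite lin_ext_basis f_PI ?(valP i) // delta_ffun_val.
- by move=> j; rewrite lin_ext_basis f_PJ ?(valP j) // delta_ffun_val.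
Qed.

End Presentation.

Section DegreeOne.
Variable p : nat.

Definition mk1 (a b : 'Z_p) : gen p 1 := (a, [tuple b]).

Lemma gen1_ind (P : gen p 1 -> Prop) : (forall a b, P (mk1 a b)) -> forall g, P g.
Proof.
move=> Pmk [a t]; have -> : t = [tuple tnth t ord0] by apply: eq_from_tnth => i; rewrite ord1.
exact: Pmk.
Qed.

Lemma I1_mk1 a b : I1 p (mk1 a b) = (a < b)%N. Proof. by []. Qed.
Lemma J1_mk1 a b : J1 p (mk1 a b) = (b == a). Proof. by []. Qed.

Lemma rel_gen_mk1 a b i : rel_gen (mk1 a b) i = mk1 b a.
Proof.
rewrite (ord1 i) /rel_gen /=; congr pair; apply: eq_from_tnth => j.
by rewrite (ord1 j) !tnth_map tnth_ord_tuple.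
Qed.

Definition f1 (g : gen p 1) :
    {ffun {g : gen p 1 | I1 p g} -> int} * {ffun {g : gen p 1 | J1 p g} -> 'Z_2} :=
  (delta_ffun (I1 p) g - delta_ffun (I1 p) (rel_gen g ord0), delta_ffun (J1 p) g).

Lemma f1_rel_gen g i : f1 (rel_gen g i) = - f1 g.
Proof.
elim/gen1_ind: g => a b; rewrite /f1 !rel_gen_mk1.
apply: injective_projections => /=; first by rewrite opprB.
rewrite oppr_ffun_Z2; have [-> // | ab] := eqVneq a b.
by rewrite !delta_ffun_out // J1_mk1 // eq_sym.
Qed.

Lemma f1_I1 h : I1 p h -> f1 h = (delta_ffun (I1 p) h, 0).
Proof.
elim/gen1_ind: h => a b; rewrite I1_mk1 => ab; rewrite /f1 rel_gen_mk1.
rewrite [delta_ffun _ (mk1 b a)]delta_ffun_out ?[delta_ffun (J1 p) _]delta_ffun_out ?subr0 //.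
  by rewrite J1_mk1 -val_eqE gtn_eqF.
by rewrite I1_mk1 -leqNgt ltnW.
Qed.

Lemma f1_J1 h : J1 p h -> f1 h = (0, delta_ffun (J1 p) h).
Proof.
by elim/gen1_ind: h => a b; rewrite J1_mk1 => /eqP ->; rewrite /f1 rel_gen_mk1 subrr.
Qed.

Lemma twice_J1 h : J1 p h -> inSLBrel (basis h *+ 2).
Proof.
elim/gen1_ind: h => a b; rewrite J1_mk1 => /eqP ->.
by apply: (inSLBrel_rel_gen_fixed (i := ord0)); rewrite rel_gen_mk1.
Qed.

Lemma lift_inverse_f1 g : lift_inverse_at f1 g.
Proof.
elim/gen1_ind: g => a b; case: (ltngtP a b) => [ab | ba | /val_inj ->].
- exact: (lift_inverse_at_PI f1_I1).
- rewrite -(rel_gen_mk1 b a ord0); apply: (lift_inverse_at_rel_gen twice_J1 f1_rel_gen).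
  exact: (lift_inverse_at_PI f1_I1).
- by apply: (lift_inverse_at_PJ f1_J1); rewrite J1_mk1.
Qed.

Lemma SLB_iso_gens1 : SLB_iso_gens (I1 p) (J1 p).
Proof.
apply: (SLB_iso_gens_of_lift_inverse twice_J1 f1_I1 f1_J1 _ f1_rel_gen lift_inverse_f1).
by elim/gen1_ind=> a b /existsP [i /existsP [j]]; rewrite !ord1.
Qed.

End DegreeOne.

Section Lexicographic.
Local Open Scope nat_scope.

Lemma lexle_refl s : lexle s s.
Proof. by elim: s => [|x s IH] //=; rewrite eqxx ltnn IH. Qed.

Lemma lexle_total s t : lexle s t || lexle t s.
Proof. by elim: s t => [|x s IH] [|y t] //=; case: ltngtP => //= _; exact: IH. Qed.

Lemma lexle_trans s t u : size s = size t -> size t = size u ->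
  lexle s t -> lexle t u -> lexle s u.
Proof.
elim: s t u => [|x s IH] [|y t] [|z u] //= [st] [tu].
move=> /orP [xy | /andP [/eqP <- le_st]] /orP [yz | /andP [/eqP <- le_tu]].
- by rewrite (ltn_trans xy yz).
- by rewrite xy.
- by rewrite yz.
- by rewrite eqxx (IH t u) ?orbT.
Qed.

Lemma lexle_anti s t : size s = size t -> lexle s t -> lexle t s -> s = t.
Proof.
elim: s t => [|x s IH] [|y t] //= [st].
by case: ltngtP => //= <- le_st le_ts; rewrite (IH t).
Qed.

Lemma lexle_min (Q : seq (seq nat)) k : Q != [::] -> all (fun v => size v == k) Q ->
  exists2 v, v \in Q & all (lexle v) Q.
Proof.
elim: Q => // x Q IH _ /= /andP [/eqP sx sQ].
have [-> | Q0] := eqVneq Q [::]; first by exists x; rewrite ?mem_head //= lexle_refl.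
have [v vQ le_vQ] := IH Q0 sQ.
have size_Q w : w \in Q -> size w = k by move=> wQ; apply/eqP; move/allP: sQ; apply.
have [le_xv | le_vx] := boolP (lexle x v).
  exists x; rewrite ?mem_head //= lexle_refl; apply/allP => w wQ.
  apply: (lexle_trans (t := v)) le_xv _; rewrite ?sx ?size_Q //.
  by move/allP: le_vQ; apply.
exists v; first by rewrite inE vQ orbT.
by rewrite /= le_vQ andbT; move: (lexle_total x v); rewrite (negbTE le_vx).
Qed.

End Lexicographic.

Section DegreeTwo.
Variable p : nat.
Implicit Types (a b c : 'Z_p) (g h : gen p 2).

Lemma tern_swap a b c : tern b a (tern a b c) = c.
Proof. by rewrite /tern; ring. Qed.
Lemma tern_cycle a b c : tern c (tern a b c) a = b.
Proof. by rewrite /tern; ring. Qed.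
Lemma tern_rev a b c : tern (tern a b c) c b = a.
Proof. by rewrite /tern; ring. Qed.
Lemma tern_idl a c : tern a a c = c.
Proof. by rewrite /tern; ring. Qed.
Lemma tern_idr a b : tern a b b = a.
Proof. by rewrite /tern; ring. Qed.
Lemma tern_eqr a b c : (tern a b c == c) = (a == b).
Proof. by rewrite /tern -subr_eq0 addrK subr_eq0. Qed.
Lemma tern_eql a b c : (tern a b c == a) = (b == c).
Proof. by rewrite /tern -addrA addrC -subr_eq0 addrK addrC subr_eq0 eq_sym. Qed.

Definition mk2 a b c : gen p 2 := (a, [tuple b; c]).

Lemma gen2_ind (P : gen p 2 -> Prop) : (forall a b c, P (mk2 a b c)) -> forall g, P g.
Proof.
move=> Pmk [a t]; have -> : t = [tuple tnth t ord0; tnth t ord_max].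
  by apply: eq_from_tnth => -[[|[|i]] lti] //=; congr tnth; apply: val_inj.
exact: Pmk.
Qed.

Lemma mk2_inj a b c a' b' c' : mk2 a b c = mk2 a' b' c' -> [/\ a = a', b = b' & c = c'].
Proof.
move=> e; split; [exact: (congr1 fst e) | exact: (congr1 (fun g => tnth g.2 ord0) e)
  | exact: (congr1 (fun g => tnth g.2 ord_max) e)].
Qed.

Lemma I2_mk2 a b c : I2 p (mk2 a b c) =
  [&& a != b, b != c & is_minQ (quad a b c (tern a b c)) (Qset a b c)].
Proof. by []. Qed.

Lemma J2_mk2 a b c : J2 p (mk2 a b c) = (b == a) && (a < c)%N.
Proof. by []. Qed.

Lemma degen_mk2 a b c : degen (mk2 a b c) = (b == c).
Proof.
apply/existsP/idP => [[[[|[|i]] lti] /existsP [[[|[|j]] ltj]]] // | bc].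
by exists ord0; apply/existsP; exists ord_max.
Qed.

Local Notation rel0 g := (rel_gen g ord0).
Local Notation rel1 g := (rel_gen g ord_max).

Lemma rel0_mk2 a b c : rel0 (mk2 a b c) = mk2 b a (tern a b c).
Proof.
by rewrite /rel_gen /=; congr pair; apply: eq_from_tnth => -[[|[|i]] lti] //;
  rewrite !tnth_map tnth_ord_tuple.
Qed.

Lemma rel1_mk2 a b c : rel1 (mk2 a b c) = mk2 c (tern a b c) a.
Proof.
by rewrite /rel_gen /=; congr pair; apply: eq_from_tnth => -[[|[|i]] lti] //;
  rewrite !tnth_map tnth_ord_tuple.
Qed.

Lemma rel0K g : rel0 (rel0 g) = g.
Proof. by elim/gen2_ind: g => a b c; rewrite !rel0_mk2 tern_swap. Qed.

Lemma rel1K g : rel1 (rel1 g) = g.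
Proof. by elim/gen2_ind: g => a b c; rewrite !rel1_mk2 tern_cycle. Qed.

Lemma rel01C g : rel0 (rel1 g) = rel1 (rel0 g).
Proof. by elim/gen2_ind: g => a b c; rewrite rel0_mk2 rel1_mk2 rel0_mk2 rel1_mk2 tern_cycle tern_swap. Qed.

(* The two relation moves generate a Klein four-group; [quad2] maps the orbit of
   [mk2 a b c] onto Q(a,b,c) (see [I2E]). *)
Definition orbit2 (g : gen p 2) := [:: g; rel0 g; rel1 g; rel0 (rel1 g)].

Lemma orbit2_eq g h : h \in orbit2 g -> orbit2 h =i orbit2 g.
Proof.
rewrite !inE => /or4P [] /eqP -> x; rewrite !inE ?rel0K ?rel1K -?rel01C ?rel0K ?rel1K //;
by case: (x == g) (x == rel0 g) (x == rel1 g) (x == rel0 (rel1 g)) => [] [] [] [].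
Qed.

Lemma orbit2_sym g h : h \in orbit2 g -> g \in orbit2 h.
Proof. by move/orbit2_eq->; rewrite mem_head. Qed.

Definition nondeg2 g := (g.1 != tnth g.2 ord0) && (tnth g.2 ord0 != tnth g.2 ord_max).

Definition quad2 g :=
  quad g.1 (tnth g.2 ord0) (tnth g.2 ord_max) (tern g.1 (tnth g.2 ord0) (tnth g.2 ord_max)).

Lemma quad2_mk2 a b c : quad2 (mk2 a b c) = quad a b c (tern a b c).
Proof. by []. Qed.

Lemma quad2_inj : injective quad2.
Proof.
elim/gen2_ind=> a b c; elim/gen2_ind=> a' b' c'.
by rewrite !quad2_mk2 => -[/val_inj-> /val_inj-> /val_inj->].
Qed.

Lemma nondeg2_mk2 a b c : nondeg2 (mk2 a b c) = (a != b) && (b != c).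
Proof. by []. Qed.

Lemma nondeg2_rel0 g : nondeg2 (rel0 g) = nondeg2 g.
Proof.
by elim/gen2_ind: g => a b c; rewrite rel0_mk2 !nondeg2_mk2 [_ == tern _ _ _]eq_sym tern_eql [b == a]eq_sym.
Qed.

Lemma nondeg2_rel1 g : nondeg2 (rel1 g) = nondeg2 g.
Proof.
elim/gen2_ind: g => a b c; rewrite rel1_mk2 !nondeg2_mk2 [c == _]eq_sym tern_eqr.
by rewrite tern_eql andbC.
Qed.

Lemma nondeg2_orbit g h : h \in orbit2 g -> nondeg2 h = nondeg2 g.
Proof. by rewrite !inE => /or4P [] /eqP ->; rewrite ?nondeg2_rel0 ?nondeg2_rel1. Qed.

Lemma I2E g : I2 p g = nondeg2 g && all (lexle (quad2 g)) (map quad2 (orbit2 g)).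
Proof.
elim/gen2_ind: g => a b c; rewrite I2_mk2 /is_minQ nondeg2_mk2 -andbA.
rewrite /orbit2 rel0_mk2 rel1_mk2 rel0_mk2 !map_cons !quad2_mk2 tern_swap tern_cycle tern_rev.
by rewrite /Qset mem_head.
Qed.

Lemma I2_orbit g h : h \in orbit2 g ->
  I2 p h = nondeg2 g && all (lexle (quad2 h)) (map quad2 (orbit2 g)).
Proof. by move=> hg; rewrite I2E (nondeg2_orbit hg) (eq_all_r (eq_mem_map _ (orbit2_eq hg))). Qed.

Lemma I2_orbit_exists g : nondeg2 g -> exists2 h, h \in orbit2 g & I2 p h.
Proof.
move=> ndg; have [v /mapP [h hg ->] le_h] := @lexle_min (map quad2 (orbit2 g)) 4 isT isT.
by exists h; rewrite // (I2_orbit hg) ndg.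
Qed.

Lemma I2_orbit_unique g h h' : h \in orbit2 g -> h' \in orbit2 g ->
  I2 p h -> I2 p h' -> h = h'.
Proof.
move=> hg h'g; rewrite (I2_orbit hg) (I2_orbit h'g) => /andP [_ /allP le_h] /andP [_ /allP le_h'].
by apply/quad2_inj/lexle_anti; rewrite ?le_h ?le_h' ?map_f.
Qed.

Hypotheses (p_gt1 : (1 < p)%N) (p_odd : odd p).

Lemma addrr_inj (x y : 'Z_p) : x + x = y + y -> x = y.
Proof.
move=> xy; apply/eqP; rewrite -subr_eq0; set d := x - y.
have d2 : d *+ 2 = 0 by rewrite /d mulr2n addrACA -opprD xy subrr.
have dp : d *+ p = 0 by rewrite -mulr_natr (pchar_Zp p_gt1) mulr0.
have -> : d = d *+ p.+1 by rewrite mulrS dp addr0.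
have -> : p.+1 = (2 * p.+1./2)%N by rewrite mul2n -[in LHS](odd_double_half p.+1) /= p_odd.
by rewrite mulrnA d2 mul0rn.
Qed.

Lemma orbit2_neq g : nondeg2 g -> [/\ rel0 g != g, rel1 g != g & rel0 (rel1 g) != g].
Proof.
elim/gen2_ind: g => a b c; rewrite nondeg2_mk2 rel0_mk2 rel1_mk2 rel0_mk2 => /andP [ab bc].
split; apply: contraNneq ab => /mk2_inj [].
- by move=> ->.
- move=> ca tb _; apply/eqP/addrr_inj/eqP; rewrite -subr_eq0.
  have -> : a + a - (b + b) = tern a b c - b by rewrite ca /tern; ring.
  by rewrite tb subrr.
- by move=> _ cb _; move: bc; rewrite cb eqxx.
Qed.

(* The signs make [f2] anti-invariant under both relation moves; the ['Z_2]-part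
   omits [rel0 g] and [rel0 (rel1 g)] because [rel0] fixes every ((a,a),(a,c)). *)
Definition f2 g :
    {ffun {h : gen p 2 | I2 p h} -> int} * {ffun {h : gen p 2 | J2 p h} -> 'Z_2} :=
  (delta_ffun (I2 p) g - delta_ffun (I2 p) (rel0 g) - delta_ffun (I2 p) (rel1 g)
     + delta_ffun (I2 p) (rel0 (rel1 g)),
   delta_ffun (J2 p) g + delta_ffun (J2 p) (rel1 g)).

Lemma deltaJ_rel0 g : delta_ffun (J2 p) (rel0 g) = delta_ffun (J2 p) g :> {ffun _ -> 'Z_2}.
Proof.
elim/gen2_ind: g => a b c; rewrite rel0_mk2; have [<- | ab] := eqVneq a b.
  by rewrite tern_idl.
by rewrite !delta_ffun_out // J2_mk2 ?(negbTE ab) // eq_sym (negbTE ab).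
Qed.

Lemma f2_rel_gen g i : f2 (rel_gen g i) = - f2 g.
Proof.
case: i => -[|[|//]] lti.
- have -> : Ordinal lti = ord0 by apply: val_inj.
  rewrite /f2 rel0K -rel01C rel0K !deltaJ_rel0; apply: injective_projections => /=.
    by rewrite !opprD !opprK (ACl (2*1*4*3)%AC).
  by rewrite oppr_ffun_Z2.
- have -> : Ordinal lti = ord_max by apply: val_inj.
  rewrite /f2 rel1K; apply: injective_projections => /=.
    by rewrite !opprD !opprK (ACl (3*4*1*2)%AC).
  by rewrite oppr_ffun_Z2 addrC.
Qed.

Lemma J2_nondeg g : nondeg2 g -> ~~ J2 p g.
Proof. by elim/gen2_ind: g => a b c; rewrite nondeg2_mk2 J2_mk2 eq_sym => /andP [/negbTE ->]. Qed.

Lemma f2_I2 h : I2 p h -> f2 h = (delta_ffun (I2 p) h, 0).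
Proof.
move=> Ih; have ndh : nondeg2 h by move: Ih; rewrite I2E => /andP [].
have [n0 n1 n01] := orbit2_neq ndh.
have notI h' : h' \in orbit2 h -> h' != h -> ~~ I2 p h'.
  by move=> h'h; apply: contraNN => Ih'; apply/eqP/(I2_orbit_unique h'h (mem_head _ _)).
rewrite /f2 [delta_ffun (I2 p) (rel0 h)]delta_ffun_out ?notI ?inE ?eqxx ?orbT //.
rewrite [delta_ffun (I2 p) (rel1 h)]delta_ffun_out ?notI ?inE ?eqxx ?orbT //.
rewrite [delta_ffun (I2 p) (rel0 (rel1 h))]delta_ffun_out ?notI ?inE ?eqxx ?orbT //.
rewrite [delta_ffun (J2 p) h]delta_ffun_out ?J2_nondeg //.
rewrite [delta_ffun (J2 p) _]delta_ffun_out ?J2_nondeg ?nondeg2_rel1 //.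
by rewrite !subr0 !addr0.
Qed.

Lemma J2_mk2_degen a b : J2 p (mk2 a b b) = false.
Proof. by rewrite J2_mk2; case: eqP => // ->; rewrite ltnn. Qed.

Lemma f2_J2 h : J2 p h -> f2 h = (0, delta_ffun (J2 p) h).
Proof.
elim/gen2_ind: h => a b c; rewrite J2_mk2 => /andP [/eqP -> ac].
rewrite /f2 !rel1_mk2 !rel0_mk2 !tern_idl subrr sub0r addNr.
by rewrite [delta_ffun (J2 p) (mk2 c c a)]delta_ffun_out ?addr0 // J2_mk2 eqxx -leqNgt ltnW.
Qed.

Lemma f2_degen g : degen g -> f2 g = 0.
Proof.
elim/gen2_ind: g => a b c; rewrite degen_mk2 => /eqP <-.
rewrite /f2 rel1_mk2 !rel0_mk2 !tern_idr !delta_ffun_out ?J2_mk2_degen //.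
  by rewrite !subr0 !addr0.
all: by rewrite I2_mk2 eqxx !andbF.
Qed.

Lemma twice_J2 h : J2 p h -> inSLBrel (basis h *+ 2).
Proof.
elim/gen2_ind: h => a b c; rewrite J2_mk2 => /andP [/eqP -> _].
by apply: (inSLBrel_rel_gen_fixed (i := ord0)); rewrite rel0_mk2 tern_idl.
Qed.

Lemma lift_inverse_f2 g : lift_inverse_at f2 g.
Proof.
have step := lift_inverse_at_rel_gen twice_J2 f2_rel_gen.
elim/gen2_ind: g => a b c; have [<- | bc] := eqVneq b c.
  by apply: (lift_inverse_at_degen f2_degen); rewrite degen_mk2.
have [ab | ab] := eqVneq a b.
  rewrite -{b}ab in bc *; case: (ltngtP a c) => [ac | ca | /val_inj ac]; last by rewrite ac eqxx in bc.
    by apply: (lift_inverse_at_PJ f2_J2); rewrite J2_mk2 eqxx.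
  have -> : mk2 a a c = rel1 (mk2 c c a) by rewrite rel1_mk2 tern_idl.
  by apply/step/(lift_inverse_at_PJ f2_J2); rewrite J2_mk2 eqxx.
have /I2_orbit_exists [h hg Ih] : nondeg2 (mk2 a b c) by rewrite nondeg2_mk2 ab.
have lift_h := lift_inverse_at_PI f2_I2 Ih.
move/orbit2_sym: hg; rewrite !inE => /or4P [] /eqP ->.
- exact: lift_h.
- exact: step.
- exact: step.
- exact/step/step.
Qed.

Lemma SLB_iso_gens2 : SLB_iso_gens (I2 p) (J2 p).
Proof.
exact: (SLB_iso_gens_of_lift_inverse twice_J2 f2_I2 f2_J2 f2_degen f2_rel_gen lift_inverse_f2).
Qed.

End DegreeTwo.

Theorem lemma3p2 (p : nat) (hp : prime p) (hodd : odd p) :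
  SLB_iso_gens (I2 p) (J2 p) /\ SLB_iso_gens (I1 p) (J1 p).
Proof. by split; [exact: SLB_iso_gens2 (prime_gt1 hp) hodd | exact: SLB_iso_gens1]. Qed.
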